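(* Let $r\in\mathbb{N}$ be fixed, let $\chi:\mathbb{R}_+\to\mathbb{R}$ be a kernel and let $f\in CB_{\mathrm{comp}}(\mathbb{R}_+)$. Then $$\lim_{w\to\infty}\left\|E_{w,r}^{\chi}f-f\right\|_\infty=0.$$
   Context: $\mathbb{R}_+=(0,\infty)$. A kernel is a continuous function $\chi:\mathbb{R}_+\to\mathbb{R}$ such that: (1) $\int_{\mathbb{R}_+}|\chi(x)|\frac{dx}{x}<\infty$ and $\chi$ is bounded on $[1/e,e]$; (2) $\sum_{k\in\mathbb{Z}}\chi(e^{-k}u)=1$ for every $u\in\mathbb{R}_+$, and $M_0(\chi):=\sup_{u\in\mathbb{R}_+}\sum_{k\in\mathbb{Z}}|\chi(e^{-k}u)|<+\infty$; (3) $\lim_{\gamma\to\infty}\sum_{|k-\log u|>\gamma}|\chi(e^{-k}u)|=0$ uniformly with respect to $u\in\mathbb{R}_+$. For $r\in\mathbb{N}$, $w>0$ and a locally integrable $f:\mathbb{R}_+\to\mathbb{R}$, $$\left(E_{w,r}^{\chi}f\right)(x):=\sum_{k\in\mathbb{Z}}\chi(e^{-k}x^{w})\, w^{r}\int_1^{e^{1/w}}\!\!\cdots\!\int_1^{e^{1/w}}\sum_{m=1}^{r}(-1)^{1-m}\binom{r}{m}f\!\left(e^{k/w}(t_1\cdots t_r)^{m/r}\right)\frac{dt_1}{t_1}\cdots\frac{dt_r}{t_r},\quad x\in\mathbb{R}_+.$$ $CB_{\mathrm{comp}}(\mathbb{R}_+)$ is the space of bounded continuous functions on $\mathbb{R}_+$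 with compact support contained in $\mathbb{R}_+$; $\|\cdot\|_\infty$ is the sup-norm on $\mathbb{R}_+$. *)

From Stdlib Require Import Reals ZArith.
From Coquelicot Require Import Coquelicot.
Open Scope R_scope.

Definition is_sumZ (a : Z -> R) (l : R) : Prop :=
  exists l1 l2,
    is_series (fun n : nat => a (Z.of_nat n)) l1 /\
    is_series (fun n : nat => a (- Z.of_nat n - 1)%Z) l2 /\ l = l1 + l2.

Definition ex_sumZ (a : Z -> R) : Prop := exists l, is_sumZ a l.

Definition sumZ (a : Z -> R) : R :=
  Series (fun n : nat => a (Z.of_nat n)) + Series (fun n : nat => a (- Z.of_nat n - 1)%Z).

Definition is_kernel (chi : R -> R) : Prop :=
  (forall x, 0 < x -> continuous chi x) /\
  ex_RInt_gen (fun x => Rabs (chi x) / x) (at_right 0) (Rbar_locally p_infty) /\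
  (exists B, forall x, / exp 1 <= x <= exp 1 -> Rabs (chi x) <= B) /\
  (forall u, 0 < u -> is_sumZ (fun k => chi (exp (- IZR k) * u)) 1) /\
  (exists M0, forall u, 0 < u ->
     ex_sumZ (fun k => Rabs (chi (exp (- IZR k) * u))) /\
     sumZ (fun k => Rabs (chi (exp (- IZR k) * u))) <= M0) /\
  (forall eps, 0 < eps -> exists g0, forall g, g0 < g -> forall u, 0 < u ->
     Rabs (sumZ (fun k => if Rlt_dec g (Rabs (IZR k - ln u))
                          then Rabs (chi (exp (- IZR k) * u)) else 0)) < eps).

Definition CB_comp (f : R -> R) : Prop :=
  (forall x, 0 < x -> continuous f x) /\
  (exists B, forall x, 0 < x -> Rabs (f x) <= B) /\
  (exists a b, 0 < a /\ a <= b /\ forall x, 0 < x -> (x < a \/ b < x) -> f x = 0).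

(* Iterated integral int_1^{e^{1/w}} ... int_1^{e^{1/w}} g(t_1 ... t_n) dt_1/t_1 ... dt_n/t_n,
   accumulating the product of the integration variables in the argument p:
   iter_int w 0 g p = g p,
   iter_int w (n+1) g p = int_1^{e^{1/w}} iter_int w n g (p * t) dt / t. *)
Fixpoint iter_int (w : R) (n : nat) (g : R -> R) (p : R) : R :=
  match n with
  | O => g p
  | S n' => RInt (fun t => iter_int w n' g (p * t) / t) 1 (exp (/ w))
  end.

Definition E_integrand (r : nat) (w : R) (f : R -> R) (k : Z) (P : R) : R :=
  sum_f_R0 (fun i : nat =>
     let m := S i in
     powerRZ (-1) (1 - Z.of_nat m) * Binomial.C r m
       * f (exp (IZR k / w) * Rpower P (INR m / INR r))) (r - 1).

Definition E_op (chi : R -> R) (r : nat) (w : R) (f : R -> R) (x : R) : R :=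
  sumZ (fun k => chi (exp (- IZR k) * Rpower x w)
                 * (w ^ r * iter_int w r (E_integrand r w f k) 1)).

From Stdlib Require Import Reals ZArith Lra Lia.
From Coquelicot Require Import Coquelicot.
Open Scope R_scope.

(* With u = x^w, E^chi_{w,r} f (x) = sum_k chi(e^{-k} u) b_k, where the weights
   chi(e^{-k} u) sum to 1 and b_k = w^r int...int sum_m c_m f(e^{k/w} P^{m/r}) is
   an average of values of f at points whose logarithms lie within r/w of k/w;
   the coefficients c_m = (-1)^{1-m} binom(r,m) also sum to 1.  Since f o exp is
   uniformly continuous, b_k is uniformly close to f(e^{k/w}), hence to f(x) when
   |k - ln u| <= gamma; the remaining k carry kernel mass that is small uniformly
   in u, and there |b_k - f(x)| is merely bounded. *)

Lemma ex_RInt_continuous_pos (F : R -> R) a b :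
  (forall q, 0 < q -> continuous F q) -> 0 < a -> 0 < b -> ex_RInt F a b.
Proof.
  intros HF Ha Hb. apply (@ex_RInt_continuous R_CompleteNormedModule).
  intros z [Hz _]. apply HF.
  assert (0 < Rmin a b) by (apply Rmin_glb_lt; assumption). lra.
Qed.

Lemma continuous_div_id (F : R -> R) q :
  continuous F q -> q <> 0 -> continuous (fun u => F u / u) q.
Proof.
  intros HF Hq. apply (continuous_mult F (fun u => / u)); [exact HF|].
  now apply continuous_Rinv.
Qed.

Lemma continuous_RInt_1_pos (F : R -> R) q :
  (forall q, 0 < q -> continuous F q) -> 0 < q ->
  continuous (fun b => RInt F 1 b) q.
Proof.
  intros HF Hq. apply (continuous_RInt_1 F 1 q).
  apply (filter_imp (fun p => 0 < p)); [|now apply open_gt].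
  intros p Hp. apply (@RInt_correct R_CompleteNormedModule).
  apply ex_RInt_continuous_pos; auto; lra.
Qed.

Lemma is_RInt_inv_exp a : is_RInt (fun t => / t) 1 (exp a) a.
Proof.
  assert (Hpos : forall x, Rmin 1 (exp a) <= x -> 0 < x).
  { intros x Hx. assert (0 < Rmin 1 (exp a)) by (apply Rmin_glb_lt; [lra | apply exp_pos]).
    lra. }
  replace a with (minus (ln (exp a)) (ln 1)) at 2
    by (rewrite ln_exp, ln_1; unfold minus, plus, opp; simpl; ring).
  apply (is_RInt_derive (V := R_CompleteNormedModule) ln (fun t => / t)).
  - intros x [Hx _]. apply is_derive_Reals, derivable_pt_lim_ln, Hpos, Hx.
  - intros x [Hx _]. apply continuous_Rinv. apply Hpos in Hx. lra.
Qed.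

Lemma exp_inv_gt1 w : 0 < w -> 1 < exp (/ w).
Proof. intros Hw. rewrite <- exp_0. apply exp_increasing, Rinv_0_lt_compat, Hw. Qed.

Section IteratedIntegral.

Variables (w : R) (h : R -> R).
Hypothesis w_pos : 0 < w.
Hypothesis h_cont : forall q, 0 < q -> continuous h q.

Lemma iter_int_S_shift n p :
  0 < p -> (forall q, 0 < q -> continuous (iter_int w n h) q) ->
  iter_int w (S n) h p = RInt (fun u => iter_int w n h u / u) 1 (p * exp (/ w))
                         - RInt (fun u => iter_int w n h u / u) 1 p.
Proof.
  intros Hp Hn. simpl.
  set (F := fun u => iter_int w n h u / u).
  assert (HF : forall q, 0 < q -> continuous F q)
    by (intros q Hq; apply continuous_div_id; [apply Hn|]; lra).
  assert (HE := exp_inv_gt1 w w_pos).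
  transitivity (RInt (fun y => scal p (F (p * y + 0))) 1 (exp (/ w))).
  { apply RInt_ext. intros t [Ht _].
    assert (0 < t) by (assert (0 < Rmin 1 (exp (/ w))) by (apply Rmin_glb_lt; lra); lra).
    unfold F, scal; simpl; unfold mult; simpl. rewrite Rplus_0_r. field. lra. }
  etransitivity.
  { apply (@RInt_comp_lin R_CompleteNormedModule F p 0 1 (exp (/ w))).
    apply ex_RInt_continuous_pos; auto; nra. }
  rewrite !Rmult_1_r, !Rplus_0_r.
  assert (C := RInt_Chasles F 1 p (p * exp (/ w))
    ltac:(apply ex_RInt_continuous_pos; auto; lra)
    ltac:(apply ex_RInt_continuous_pos; auto; nra)).
  unfold plus in C; simpl in C. lra.
Qed.

Lemma iter_int_continuous n p : 0 < p -> continuous (iter_int w n h) p.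
Proof.
  revert p. induction n as [|n IH]; [exact h_cont|]. intros p0 Hp0.
  set (F := fun u => iter_int w n h u / u).
  assert (HF : forall q, 0 < q -> continuous F q)
    by (intros q Hq; apply continuous_div_id; [apply IH|]; lra).
  assert (HE := exp_inv_gt1 w w_pos).
  apply (continuous_ext_loc (T := R_UniformSpace) (U := R_UniformSpace) _
           (fun p : R => RInt F 1 (p * exp (/ w)) - RInt F 1 p)).
  - apply (filter_imp (fun p => 0 < p)); [|now apply open_gt].
    intros p Hp. now rewrite iter_int_S_shift.
  - apply (continuous_minus (U := R_UniformSpace) (V := R_NormedModule)
             (fun p : R => RInt F 1 (p * exp (/ w))) (fun p : R => RInt F 1 p)).
    + apply (continuous_comp (fun p => p * exp (/ w)) (fun b => RInt F 1 b)).
      * apply (continuous_mult (fun p : R => p) (fun _ => exp (/ w))).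
        -- apply continuous_id.
        -- apply continuous_const.
      * apply continuous_RInt_1_pos; auto; nra.
    + now apply continuous_RInt_1_pos.
Qed.

(* Each integration multiplies the argument by a factor in [1, e^(1/w)] and
   carries the weight dt/t of total mass 1/w. *)
Lemma iter_int_close n p c M :
  0 < p -> (forall q, p <= q <= p * exp (INR n / w) -> Rabs (h q - c) <= M) ->
  Rabs (iter_int w n h p - c / w ^ n) <= M / w ^ n.
Proof.
  revert p. induction n as [|n IH]; intros p Hp Hq.
  { simpl. rewrite !Rdiv_1_r. apply Hq. rewrite Rdiv_0_l, exp_0. lra. }
  assert (HE := exp_inv_gt1 w w_pos).
  assert (Hwn : 0 < w ^ n) by (apply pow_lt; lra).
  set (K := fun t => iter_int w n h (p * t) / t).
  assert (HK : is_RInt K 1 (exp (/ w)) (iter_int w (S n) h p)).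
  { apply (@RInt_correct R_CompleteNormedModule), (@ex_RInt_continuous R_CompleteNormedModule).
    intros t Ht. rewrite Rmin_left in Ht by lra.
    apply continuous_div_id; [|lra].
    apply (continuous_comp (fun t => p * t) (iter_int w n h)).
    - apply (continuous_mult (fun _ => p) (fun t : R => t)).
      + apply continuous_const.
      + apply continuous_id.
    - apply iter_int_continuous. nra. }
  assert (HC := is_RInt_scal (V := R_NormedModule) _ _ _ (c / w ^ n) _ (is_RInt_inv_exp (/ w))).
  assert (HM := is_RInt_scal (V := R_NormedModule) _ _ _ (M / w ^ n) _ (is_RInt_inv_exp (/ w))).
  assert (Hpt : forall t, 1 <= t <= exp (/ w) ->
    norm (minus (K t) (scal (c / w ^ n) (/ t))) <= scal (M / w ^ n) (/ t)).
  { intros t Ht. change (norm ?x) with (Rabs x).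
    unfold minus, plus, opp, scal, K; simpl; unfold mult; simpl.
    replace (iter_int w n h (p * t) / t + - (c / w ^ n * / t))
      with ((iter_int w n h (p * t) - c / w ^ n) * / t) by (field; lra).
    rewrite Rabs_mult, (Rabs_right (/ t)) by (apply Rle_ge, Rlt_le, Rinv_0_lt_compat; lra).
    apply Rmult_le_compat_r; [apply Rlt_le, Rinv_0_lt_compat; lra|].
    apply IH; [nra|]. intros q Hq'. apply Hq. split; [nra|].
    rewrite S_INR, Rdiv_plus_distr, exp_plus, Rdiv_1_l.
    assert (0 < exp (INR n / w)) by apply exp_pos.
    apply (Rle_trans _ _ _ (proj2 Hq')).
    rewrite (Rmult_comm (exp (INR n / w))), <- Rmult_assoc.
    apply Rmult_le_compat_r; nra. }
  assert (B := norm_RInt_le _ _ _ _ _ _ (Rlt_le _ _ HE) Hpt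
                 (is_RInt_minus _ _ _ _ _ _ HK HC) HM).
  change (norm ?x) with (Rabs x) in B.
  unfold minus, plus, opp, scal in B; simpl in B; unfold mult in B; simpl in B.
  replace (c / w ^ S n) with (c / w ^ n * / w) by (simpl; field; lra).
  replace (M / w ^ S n) with (M / w ^ n * / w) by (simpl; field; lra).
  exact B.
Qed.

End IteratedIntegral.

Definition sampling_coef (r i : nat) : R :=
  powerRZ (-1) (1 - Z.of_nat (S i)) * Binomial.C r (S i).

Definition sampling_coef_abs_sum (r : nat) : R :=
  sum_f_R0 (fun i => Rabs (sampling_coef r i)) (r - 1).

Lemma powerRZ_m1_sign i : powerRZ (-1) (1 - Z.of_nat (S i)) = (-1) ^ i.
Proof.
  replace (1 - Z.of_nat (S i))%Z with (- Z.of_nat i)%Z by lia.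
  destruct i as [|i]; [reflexivity|].
  change (Z.of_nat (S i)) with (Z.pos (Pos.of_succ_nat i)). simpl.
  rewrite SuccNat2Pos.id_succ, <- pow_inv.
  now replace (/ -1) with (-1) by field.
Qed.

(* Expand (-1 + 1)^r = 0 by the binomial theorem. *)
Lemma sum_sampling_coef r : (0 < r)%nat -> sum_f_R0 (sampling_coef r) (r - 1) = 1.
Proof.
  intros Hr.
  assert (Hb := binomial (-1) 1 r).
  replace (-1 + 1) with 0 in Hb by ring. rewrite pow_ne_zero in Hb by lia.
  rewrite decomp_sum in Hb by lia.
  replace (Init.Nat.pred r) with (r - 1)%nat in Hb by lia.
  assert (C0 : Binomial.C r 0 = 1).
  { unfold Binomial.C. rewrite Nat.sub_0_r. simpl. field. apply INR_fact_neq_0. }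
  rewrite C0, pow1, pow_O in Hb.
  replace (sum_f_R0 (sampling_coef r) (r - 1))
    with (-1 * sum_f_R0 (fun i => Binomial.C r (S i) * (-1) ^ S i * 1 ^ (r - S i)) (r - 1)).
  - lra.
  - rewrite scal_sum. apply sum_eq. intros i _.
    unfold sampling_coef. rewrite powerRZ_m1_sign, pow1. simpl. ring.
Qed.

Lemma sampling_coef_abs_sum_ge0 r : 0 <= sampling_coef_abs_sum r.
Proof. apply cond_pos_sum. intros i. apply Rabs_pos. Qed.

Lemma continuous_sum_f_R0 (F : nat -> R -> R) n q :
  (forall i, (i <= n)%nat -> continuous (F i) q) ->
  continuous (fun P => sum_f_R0 (fun i => F i P) n) q.
Proof.
  induction n as [|n IH]; intros H; simpl; [apply H; lia|].
  apply (continuous_plus (U := R_UniformSpace) (V := R_NormedModule)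
           (fun P => sum_f_R0 (fun i => F i P) n) (F (S n))).
  - apply IH. intros i Hi. apply H. lia.
  - apply H. lia.
Qed.

Lemma E_integrand_continuous r w f k q :
  (forall q, 0 < q -> continuous f q) -> 0 < q ->
  continuous (E_integrand r w f k) q.
Proof.
  intros Hf Hq. unfold E_integrand; cbv zeta.
  apply (continuous_sum_f_R0 (fun i P => sampling_coef r i
           * f (exp (IZR k / w) * Rpower P (INR (S i) / INR r)))).
  intros i _.
  apply (continuous_mult (fun _ => sampling_coef r i)); [apply continuous_const|].
  apply (continuous_comp (fun P => exp (IZR k / w) * Rpower P (INR (S i) / INR r)) f).
  - apply (continuous_mult (fun _ => exp (IZR k / w))); [apply continuous_const|].
    apply continuous_exp_comp.
    apply (continuous_mult (fun _ => INR (S i) / INR r) ln); [apply continuous_const|].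
    apply (ex_derive_continuous (K := R_AbsRing) (V := R_NormedModule)).
    exists (/ q). apply is_derive_Reals, derivable_pt_lim_ln, Hq.
  - apply Hf, Rmult_lt_0_compat; apply exp_pos.
Qed.

Lemma E_integrand_close r w f k P c eps : (0 < r)%nat ->
  (forall i, (i <= r - 1)%nat ->
     Rabs (f (exp (IZR k / w) * Rpower P (INR (S i) / INR r)) - c) <= eps) ->
  Rabs (E_integrand r w f k P - c) <= sampling_coef_abs_sum r * eps.
Proof.
  intros Hr H. unfold E_integrand; cbv zeta.
  rewrite <- (Rmult_1_r c), <- (sum_sampling_coef r Hr), scal_sum, <- minus_sum.
  eapply Rle_trans; [apply Rsum_abs|].
  unfold sampling_coef_abs_sum. rewrite Rmult_comm, scal_sum.
  apply sum_Rle. intros i Hi. fold (sampling_coef r i).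
  rewrite <- Rmult_minus_distr_l, Rabs_mult.
  apply Rmult_le_compat_l; [apply Rabs_pos | auto].
Qed.

Lemma ex_sumZ_iff a : ex_sumZ a <->
  ex_series (fun n : nat => a (Z.of_nat n)) /\ ex_series (fun n : nat => a (- Z.of_nat n - 1)%Z).
Proof.
  split.
  - intros (l & l1 & l2 & H1 & H2 & _). split; eexists; eauto.
  - intros [[l1 H1] [l2 H2]]. exists (l1 + l2), l1, l2. auto.
Qed.

Lemma is_sumZ_unique a l : is_sumZ a l -> sumZ a = l.
Proof.
  intros (l1 & l2 & H1 & H2 & ->). unfold sumZ.
  now rewrite (is_series_unique _ _ H1), (is_series_unique _ _ H2).
Qed.

Lemma sumZ_ext a b : (forall k, a k = b k) -> sumZ a = sumZ b.
Proof.
  intros H. unfold sumZ.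
  f_equal; apply Series_ext; intros n; apply H.
Qed.

Lemma series_abs_le (u v : nat -> R) :
  (forall n, Rabs (u n) <= v n) -> ex_series v ->
  ex_series u /\ Rabs (Series u) <= Series v.
Proof.
  intros H Hv.
  assert (Habs : ex_series (fun n => Rabs (u n))).
  { apply (ex_series_le (K := R_AbsRing) (V := R_CompleteNormedModule)) with (2 := Hv).
    intros n. change (norm ?x) with (Rabs x). now rewrite Rabs_Rabsolu. }
  split.
  - now apply (ex_series_le (K := R_AbsRing) (V := R_CompleteNormedModule)) with (2 := Hv).
  - eapply Rle_trans; [now apply Series_Rabs|].
    apply Series_le; auto. intros n. split; [apply Rabs_pos | apply H].
Qed.

Lemma sumZ_abs_le a b : (forall k, Rabs (a k) <= b k) -> ex_sumZ b ->
  ex_sumZ a /\ Rabs (sumZ a) <= sumZ b.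
Proof.
  intros H Hb. apply ex_sumZ_iff in Hb as [Hb1 Hb2].
  destruct (series_abs_le _ _ (fun n => H (Z.of_nat n)) Hb1) as [E1 L1].
  destruct (series_abs_le _ _ (fun n => H (- Z.of_nat n - 1)%Z) Hb2) as [E2 L2].
  split; [now apply ex_sumZ_iff|].
  unfold sumZ. eapply Rle_trans; [apply Rabs_triang|]. lra.
Qed.

Lemma sumZ_linear a b al be : ex_sumZ a -> ex_sumZ b ->
  ex_sumZ (fun k => al * a k + be * b k) /\
  sumZ (fun k => al * a k + be * b k) = al * sumZ a + be * sumZ b.
Proof.
  intros Ha Hb. apply ex_sumZ_iff in Ha as [Ha1 Ha2]. apply ex_sumZ_iff in Hb as [Hb1 Hb2].
  assert (Hlin : forall u v : nat -> R, ex_series u -> ex_series v ->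
            ex_series (fun n => al * u n + be * v n) /\
            Series (fun n => al * u n + be * v n) = al * Series u + be * Series v).
  { intros u v Hu Hv.
    assert (Su := ex_series_scal_l (K := R_AbsRing) (V := R_NormedModule) al u Hu).
    assert (Sv := ex_series_scal_l (K := R_AbsRing) (V := R_NormedModule) be v Hv).
    split.
    - exact (ex_series_plus (K := R_AbsRing) (V := R_NormedModule) _ _ Su Sv).
    - rewrite (Series_plus (fun n => al * u n) (fun n => be * v n)) by assumption.
      now rewrite !Series_scal_l. }
  destruct (Hlin _ _ Ha1 Hb1) as [E1 S1]. destruct (Hlin _ _ Ha2 Hb2) as [E2 S2].
  split; [now apply ex_sumZ_iff|].
  unfold sumZ. rewrite S1, S2. ring.
Qed.

(* sum_k a_k b_k - c = sum_k a_k (b_k - c), split according to dist k <= g. *)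
Lemma sumZ_weighted_close (a b dist : Z -> R) (c g eta D M tau : R) :
  is_sumZ a 1 ->
  ex_sumZ (fun k => Rabs (a k)) -> sumZ (fun k => Rabs (a k)) <= M ->
  sumZ (fun k => if Rlt_dec g (dist k) then Rabs (a k) else 0) <= tau ->
  (forall k, Rabs (b k - c) <= D) ->
  (forall k, dist k <= g -> Rabs (b k - c) <= eta) ->
  0 <= eta -> 0 <= D ->
  Rabs (sumZ (fun k => a k * b k) - c) <= eta * M + D * tau.
Proof.
  intros Ha Habs HM Htau HD Hnear Heta HD0.
  set (far := fun k => if Rlt_dec g (dist k) then Rabs (a k) else 0).
  assert (Hfar : ex_sumZ far).
  { apply (sumZ_abs_le far (fun k => Rabs (a k))); [|exact Habs].
    intros k. unfold far. destruct Rlt_dec.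
    - rewrite Rabs_Rabsolu. lra.
    - rewrite Rabs_R0. apply Rabs_pos. }
  assert (Hterm : forall k, Rabs (a k * (b k - c)) <= eta * Rabs (a k) + D * far k).
  { intros k. rewrite Rabs_mult. unfold far. destruct Rlt_dec as [_|Hk].
    - assert (Rabs (a k) * Rabs (b k - c) <= Rabs (a k) * D)
        by (apply Rmult_le_compat_l; [apply Rabs_pos | apply HD]).
      assert (0 <= eta * Rabs (a k)) by (apply Rmult_le_pos; [lra | apply Rabs_pos]).
      lra.
    - rewrite Rmult_0_r, Rplus_0_r, Rmult_comm.
      apply Rmult_le_compat_r; [apply Rabs_pos | apply Hnear; lra]. }
  destruct (sumZ_linear _ _ eta D Habs Hfar) as [Hex Hsum].
  destruct (sumZ_abs_le _ _ Hterm Hex) as [Hexd Hled].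
  destruct (sumZ_linear _ _ 1 c Hexd (ex_intro _ 1 Ha)) as [_ Hsplit].
  rewrite (sumZ_ext _ (fun k => 1 * (a k * (b k - c)) + c * a k)) by (intros; ring).
  rewrite Hsplit, (is_sumZ_unique _ _ Ha), Rmult_1_r, Rmult_1_l, Rplus_minus_r.
  eapply Rle_trans; [exact Hled|]. rewrite Hsum.
  apply Rplus_le_compat; apply Rmult_le_compat_l; assumption.
Qed.

(* Outside [ln a - 1, ln b + 1] both values vanish, since a step of at most 1/2
   cannot cross the gap between that interval and [ln a, ln b]. *)
Lemma CB_comp_exp_uniformly_continuous f : CB_comp f ->
  forall eps, 0 < eps -> exists delta, 0 < delta /\
  forall s t, Rabs (s - t) <= delta -> Rabs (f (exp s) - f (exp t)) <= eps.
Proof.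
  intros (Hc & _ & a & b & Ha & Hab & Hz) eps Heps.
  set (la := ln a). set (lb := ln b).
  assert (Hout : forall s, s < la \/ lb < s -> f (exp s) = 0).
  { intros s Hs. apply Hz; [apply exp_pos|]. destruct Hs as [Hs|Hs]; [left|right].
    - rewrite <- (exp_ln a) by lra. now apply exp_increasing.
    - rewrite <- (exp_ln b) by lra. now apply exp_increasing. }
  assert (Hcont : forall s, continuity_pt (fun s => f (exp s)) s).
  { intros s. apply continuity_pt_filterlim, (continuous_comp exp f).
    - apply continuous_exp_comp, continuous_id.
    - apply Hc, exp_pos. }
  destruct (Heine _ (fun s => la - 1 <= s <= lb + 1) (compact_P3 _ _) (fun s _ => Hcont s)
              (mkposreal eps Heps)) as [[d Hd] Hunif]; simpl in Hunif.
  exists (Rmin (d / 2) (1 / 2)). split; [apply Rmin_glb_lt; lra|].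
  intros s t Hst.
  assert (Rmin (d / 2) (1 / 2) <= d / 2) by apply Rmin_l.
  assert (Rmin (d / 2) (1 / 2) <= 1 / 2) by apply Rmin_r.
  apply Rabs_le_between' in Hst.
  destruct (Rle_dec (la - 1) s); destruct (Rle_dec s (lb + 1));
  destruct (Rle_dec (la - 1) t); destruct (Rle_dec t (lb + 1));
  try (rewrite (Hout s), (Hout t) by lra; rewrite Rminus_0_r, Rabs_R0; lra).
  apply Rlt_le, Hunif; try lra. apply Rabs_def1; lra.
Qed.

(* The points e^(k/w) (t_1...t_r)^(m/r) have logarithms within r/w of k/w. *)
Lemma sampling_value_close r w f k e delta :
  (0 < r)%nat -> 0 < w -> (forall q, 0 < q -> continuous f q) ->
  (forall s t, Rabs (s - t) <= delta -> Rabs (f (exp s) - f (exp t)) <= e) ->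
  INR r / w <= delta ->
  Rabs (w ^ r * iter_int w r (E_integrand r w f k) 1 - f (exp (IZR k / w)))
    <= sampling_coef_abs_sum r * e.
Proof.
  intros Hr Hw Hf Huc Hrw.
  assert (Hwr : 0 < w ^ r) by (apply pow_lt; lra).
  assert (HI : Rabs (iter_int w r (E_integrand r w f k) 1 - f (exp (IZR k / w)) / w ^ r)
                 <= sampling_coef_abs_sum r * e / w ^ r).
  { apply iter_int_close; [assumption | intros q Hq; now apply E_integrand_continuous | lra |].
    intros q Hq. rewrite Rmult_1_l in Hq. apply E_integrand_close; [assumption|].
    intros i Hi. unfold Rpower. rewrite <- exp_plus. apply Huc.
    assert (Hlnq : 0 <= ln q <= INR r / w).
    { rewrite <- ln_1, <- (ln_exp (INR r / w)). split; apply ln_le; lra. }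
    assert (Hm : 0 <= INR (S i) / INR r <= 1).
    { assert (0 < INR r) by (apply lt_0_INR; lia).
      assert (INR (S i) <= INR r) by (apply le_INR; lia).
      split; [apply Rdiv_le_0_compat; [apply pos_INR | lra]|].
      apply Rle_div_l; lra. }
    replace (IZR k / w + INR (S i) / INR r * ln q - IZR k / w)
      with (INR (S i) / INR r * ln q) by ring.
    rewrite Rabs_right by (apply Rle_ge, Rmult_le_pos; lra).
    nra. }
  replace (w ^ r * iter_int w r (E_integrand r w f k) 1 - f (exp (IZR k / w)))
    with (w ^ r * (iter_int w r (E_integrand r w f k) 1 - f (exp (IZR k / w)) / w ^ r))
    by (field; lra).
  rewrite Rabs_mult, (Rabs_right (w ^ r)) by lra.
  replace (sampling_coef_abs_sum r * e)
    with (w ^ r * (sampling_coef_abs_sum r * e / w ^ r)) by (field; lra).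
  apply Rmult_le_compat_l; lra.
Qed.

Lemma sampling_value_bounded r w f x k e delta B :
  (0 < r)%nat -> 0 < w -> 0 < x -> (forall q, 0 < q -> continuous f q) ->
  (forall q, 0 < q -> Rabs (f q) <= B) ->
  (forall s t, Rabs (s - t) <= delta -> Rabs (f (exp s) - f (exp t)) <= e) ->
  INR r / w <= delta ->
  Rabs (w ^ r * iter_int w r (E_integrand r w f k) 1 - f x)
    <= sampling_coef_abs_sum r * e + 2 * B.
Proof.
  intros Hr Hw Hx Hfc HB Huc Hrw.
  assert (Hv := HB (exp (IZR k / w)) (exp_pos _)). assert (Hfx := HB x Hx).
  assert (H := sampling_value_close r w f k e delta Hr Hw Hfc Huc Hrw).
  apply Rabs_le_between in Hv, Hfx, H. apply Rabs_le_between. lra.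
Qed.

Lemma sampling_value_near r w f x k e delta g :
  (0 < r)%nat -> 0 < w -> 0 < x -> (forall q, 0 < q -> continuous f q) ->
  (forall s t, Rabs (s - t) <= delta -> Rabs (f (exp s) - f (exp t)) <= e) ->
  INR r / w <= delta -> g / w <= delta ->
  Rabs (IZR k - ln (Rpower x w)) <= g ->
  Rabs (w ^ r * iter_int w r (E_integrand r w f k) 1 - f x)
    <= (sampling_coef_abs_sum r + 1) * e.
Proof.
  intros Hr Hw Hx Hfc Huc Hrw Hgw Hk.
  assert (Hnear : Rabs (f (exp (IZR k / w)) - f x) <= e).
  { rewrite <- (exp_ln x Hx). apply Huc.
    replace (IZR k / w - ln x) with ((IZR k - ln (Rpower x w)) / w)
      by (rewrite ln_Rpower; field; lra).
    unfold Rdiv. rewrite Rabs_mult, (Rabs_right (/ w))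
      by (apply Rle_ge, Rlt_le, Rinv_0_lt_compat; lra).
    apply Rle_trans with (g / w); [|exact Hgw].
    apply Rmult_le_compat_r; [apply Rlt_le, Rinv_0_lt_compat|]; lra. }
  assert (H := sampling_value_close r w f k e delta Hr Hw Hfc Huc Hrw).
  apply Rabs_le_between in Hnear, H. apply Rabs_le_between. lra.
Qed.

Theorem theorem2 (r : nat) (chi f : R -> R) :
  (0 < r)%nat -> is_kernel chi -> CB_comp f ->
  forall eps, 0 < eps -> exists W, forall w, W < w -> 0 < w ->
    forall x, 0 < x -> Rabs (E_op chi r w f x - f x) <= eps.
Proof.
  intros Hr Hk Hf eps Heps.
  destruct Hk as (_ & _ & _ & Hunit & [M0 HM0] & Htail).
  pose proof Hf as (Hfc & [B HB] & _).
  assert (HB0 : 0 <= B) by (apply (Rle_trans _ _ _ (Rabs_pos (f 1))), HB; lra).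
  assert (HA := sampling_coef_abs_sum_ge0 r). set (A := sampling_coef_abs_sum r) in *.
  assert (HM0abs := Rabs_pos M0).
  set (e := eps / (2 * (A + 1) * (Rabs M0 + 1))).
  set (tau := eps / (2 * (A * e + 2 * B + 1))).
  assert (He : 0 < e) by (apply Rdiv_lt_0_compat; nra).
  assert (Htau : 0 < tau) by (apply Rdiv_lt_0_compat; nra).
  destruct (Htail tau Htau) as [g0 Hg0].
  destruct (CB_comp_exp_uniformly_continuous f Hf e He) as (delta & Hdelta & Huc).
  set (g := Rabs g0 + 1).
  assert (Hg : g0 < g /\ 0 < g) by (pose proof (Rle_abs g0); pose proof (Rabs_pos g0); unfold g; lra).
  exists ((g + INR r) / delta). intros w Hw Hw0 x Hx.
  apply Rlt_div_l in Hw; [|lra]. pose proof (pos_INR r).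
  assert (Hrw : INR r / w <= delta) by (apply Rle_div_l; nra).
  assert (Hgw : g / w <= delta) by (apply Rle_div_l; nra).
  assert (Hu : 0 < Rpower x w) by apply exp_pos.
  destruct (HM0 _ Hu) as [Habs HM].
  apply Rle_trans with ((A + 1) * e * M0 + (A * e + 2 * B) * tau).
  - apply (sumZ_weighted_close _ _ (fun k => Rabs (IZR k - ln (Rpower x w))) _ g); auto.
    + apply Rlt_le, (Rle_lt_trans _ _ _ (Rle_abs _)), Hg0; [apply Hg | exact Hu].
    + intros k. now apply sampling_value_bounded with delta.
    + intros k Hk. now apply sampling_value_near with delta g.
    + apply Rmult_le_pos; lra.
    + apply Rplus_le_le_0_compat; [apply Rmult_le_pos|]; lra.
  - assert ((A + 1) * e * (Rabs M0 + 1) = eps / 2) by (unfold e; field; lra).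
    assert (tau * (A * e + 2 * B + 1) = eps / 2) by (unfold tau; field; nra).
    assert ((A + 1) * e * M0 <= (A + 1) * e * (Rabs M0 + 1))
      by (apply Rmult_le_compat_l; [nra | pose proof (Rle_abs M0); lra]).
    nra.
Qed.
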